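(* Let $G$ be a finite bipartite graph. Then there exist $n,k\in\mathbb{N}$ with $k\le n$ such that for every 2-coloring of the edges of $B_{n,k}$, there exists an induced monochromatic copy of $G$ in $B_{n,k}$; that is, there is a set $V'$ of vertices of $B_{n,k}$ such that the induced subgraph of $B_{n,k}$ on $V'$ is isomorphic to $G$ and all of its edges receive the same color.
   Context: For $n\in\mathbb{N}$, $[n]=\{1,\dots,n\}$, and for a set $X$, $\binom{X}{k}$ denotes the set of $k$-element subsets of $X$. For $k\le n$, $B_{n,k}$ is the bipartite graph with left vertex set $[n]$, right vertex set $\binom{[n]}{k}$, and edge set $\{(x,X)\in[n]\times\binom{[n]}{k} : x\in X\}$. A bipartite graph is a graph whose vertex set is partitioned into sets $A,B$ with all edges between $A$ and $B$. For a graph $H=(V,E)$ and $V'\subseteq V$, the induced subgraph on $V'$ has vertex set $V'$ and edge set consisting of all edges of $H$ with both endpoints in $V'$. A 2-coloring of the edges is a map from the edge set to a 2-element set of colors. *)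

From mathcomp Require Import all_boot.
Set Implicit Arguments. Unset Strict Implicit. Unset Printing Implicit Defensive.

Definition simple_graph (V : finType) (e : rel V) : Prop :=
  symmetric e /\ irreflexive e.

Definition bipartite (V : finType) (e : rel V) : Prop :=
  exists side : V -> bool, forall u v, e u v -> side u != side v.

(* The k-element subsets of [n] (we use 'I_n = {0,...,n-1} for [n]). *)
Definition kset (n k : nat) := {X : {set 'I_n} | #|X| == k}.

Definition Bvert (n k : nat) := ('I_n + kset n k)%type.

Definition Badj (n k : nat) (a b : Bvert n k) : bool :=
  match a, b with
  | inl x, inr X => x \in val X
  | inr X, inl x => x \in val X
  | _, _ => false
  end.

Definition Bedge (n k : nat) := {p : 'I_n * kset n k | p.1 \in val p.2}.

From mathcomp Require Import all_boot zify.
Set Implicit Arguments. Unset Strict Implicit. Unset Printing Implicit Defensive.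

(* Let N = |V| and K = 2N + 1, and colour each K-subset X of [n] by the K bits
   "colour of the edge (i-th smallest element of X, X)".  By hypergraph
   Ramsey there is a large set B on which the colour of an edge (x, X), X a
   K-subset of B, depends only on the rank of x in X.  Some colour b occurs at
   N of the first 2N ranks; give each vertex w of G its own such rank sig w.
   Cut B into K blocks of W consecutive elements.  A left vertex w becomes the
   first element of block sig w; a right vertex u becomes the K-set taking one
   element from every block: the first element of block sig w for each
   neighbour w of u, another one otherwise, and in the last block an element
   that separates distinct right vertices.  Then w lies in the set of u, and
   then as its (sig w)-th element, exactly when they are adjacent, so all the
   edges of the copy get colour b. *)

Definition monochromatic (T : finType) (k : nat) (c : {set T} -> bool)
    (B : {set T}) (b : bool) :=
  forall X : {set T}, X \subset B -> #|X| = k -> c X = b.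

Lemma monochromatic_sub (T : finType) k c (B B' : {set T}) b :
  B' \subset B -> monochromatic k c B b -> monochromatic k c B' b.
Proof. by move=> sB'B hB X sXB'; apply: hB; apply: subset_trans sXB' sB'B. Qed.

Lemma monochromatic_setU1 (T : finType) k c x (B : {set T}) b : x \notin B ->
  monochromatic k.+1 c B b -> monochromatic k (fun Y => c (x |: Y)) B b ->
  monochromatic k.+1 c (x |: B) b.
Proof.
move=> xNB hB hxB X sX cardX; have [xX | xNX] := boolP (x \in X).
- rewrite -(setD1K xX); apply: hxB.
  + apply/subsetP => y; rewrite !inE => /andP[yx /(subsetP sX)].
    by rewrite !inE (negbTE yx).
  + by move: cardX; rewrite (cardsD1 x X) xX => -[].
- apply: hB cardX; apply/subsetP => y yX.
  case/setU1P: (subsetP sX y yX) => // yx.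
  by move: xNX; rewrite -yx yX.
Qed.

Lemma ramsey k s t : exists N, forall (T : finType) (A : {set T})
    (c : {set T} -> bool), N <= #|A| ->
  exists2 B : {set T}, B \subset A &
    (s <= #|B| /\ monochromatic k c B true) \/
    (t <= #|B| /\ monochromatic k c B false).
Proof.
elim: k s t => [|k IHk] s t.
  exists (maxn s t) => T A c leNA; exists A => //.
  case c0: (c set0); [left | right]; (split; first lia);
    by move=> X _ /cards0_eq ->.
elim: s t => [|s IHs] t.
  exists 0 => T A c _; exists set0; first exact: sub0set.
  by left; split => // X /subset_leq_card; rewrite cards0; lia.
elim: t => [|t IHt].
  exists 0 => T A c _; exists set0; first exact: sub0set.
  by right; split => // X /subset_leq_card; rewrite cards0; lia.
have [N1 HN1] := IHs t.+1; have [N2 HN2] := IHt.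
have [N3 HN3] := IHk N1 N2.
exists N3.+1 => T A c leNA.
have [x xA] : exists x, x \in A by apply/card_gt0P; lia.
have leNAx : N3 <= #|A :\ x| by move: leNA; rewrite (cardsD1 x A) xA; lia.
have subA (B : {set T}) : B \subset A :\ x -> B \subset A.
  by move=> sB; apply: subset_trans sB (subsetDl _ _).
have extend b (B : {set T}) : B \subset A :\ x -> monochromatic k.+1 c B b ->
    monochromatic k (fun Y => c (x |: Y)) B b ->
  exists2 B1 : {set T}, B1 \subset A & #|B1| = #|B|.+1 /\ monochromatic k.+1 c B1 b.
  move=> sB hB hxB; have xNB : x \notin B.
    by apply/negP => /(subsetP sB); rewrite setD11.
  exists (x |: B); first by rewrite subUset sub1set xA subA.
  by rewrite cardsU1 xNB; split => //; apply: monochromatic_setU1.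
have [B' sB' [[cardB' hB'] | [cardB' hB']]] :=
  HN3 T (A :\ x) (fun Y => c (x |: Y)) leNAx.
- have [B sB [[cardB hB] | [cardB hB]]] := HN1 T B' c cardB'.
  + have [B1 sB1 [cardB1 hB1]] :=
      extend true B (subset_trans sB sB') hB (monochromatic_sub sB hB').
    by exists B1 => //; left; split => //; lia.
  + by exists B; [apply/subA/(subset_trans sB sB') | right].
- have [B sB [[cardB hB] | [cardB hB]]] := HN2 T B' c cardB'.
  + by exists B; [apply/subA/(subset_trans sB sB') | left].
  + have [B1 sB1 [cardB1 hB1]] :=
      extend false B (subset_trans sB sB') hB (monochromatic_sub sB hB').
    by exists B1 => //; right; split => //; lia.
Qed.

Lemma ramsey_simultaneous k j m : exists N, forall (T : finType)
    (A : {set T}) (cs : nat -> {set T} -> bool), N <= #|A| ->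
  exists (B : {set T}) (col : nat -> bool), [/\ B \subset A, m <= #|B| &
    forall i, i < j -> monochromatic k (cs i) B (col i)].
Proof.
elim: j => [|j [N' HN']].
  by exists m => T A cs leNA; exists A, (fun=> true).
have [N HN] := ramsey k N' N'.
exists N => T A cs leNA.
have [B1 sB1 HB1] := HN T A (cs j) leNA.
have [b [cardB1 hB1]] : exists b, N' <= #|B1| /\ monochromatic k (cs j) B1 b.
  by case: HB1 => -[? ?]; [exists true | exists false].
have [B [col [sB cardB hB]]] := HN' T B1 cs cardB1.
exists B, (fun i => if i == j then b else col i); split => //.
  exact: subset_trans sB sB1.
move=> i; rewrite ltnS leq_eqVlt => /orP[/eqP -> | ij].
  by rewrite eqxx; apply: monochromatic_sub sB hB1.
by rewrite ltn_eqF //; apply: hB.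
Qed.

Definition rank_in n (X : {set 'I_n}) (x : 'I_n) : nat :=
  #|[set y in X | y < x]|.

Lemma rank_in_ltn n (X : {set 'I_n}) (x y : 'I_n) :
  x \in X -> x < y -> rank_in X x < rank_in X y.
Proof.
move=> xX xy; apply/proper_card/properP; split.
  by apply/subsetP => z; rewrite !inE => /andP[-> zx]; apply: ltn_trans zx xy.
by exists x; rewrite !inE ?xX ?xy ?ltnn.
Qed.

Lemma rank_in_inj n (X : {set 'I_n}) : {in X &, injective (rank_in X)}.
Proof.
move=> x y xX yX Exy; case: (ltngtP x y) => [xy | yx | /val_inj //].
  by have := rank_in_ltn xX xy; rewrite Exy ltnn.
by have := rank_in_ltn yX yx; rewrite Exy ltnn.
Qed.

Lemma rank_in_lt_card n (X : {set 'I_n}) x : x \in X -> rank_in X x < #|X|.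
Proof.
move=> xX; apply/proper_card/properP; split.
  by apply/subsetP => z; rewrite !inE => /andP[].
by exists x; rewrite ?inE ?xX ?ltnn ?andbF.
Qed.

Lemma card_ord_lt K (r : 'I_K) : #|[set i : 'I_K | i < r]| = r.
Proof.
have rK : r <= K := ltnW (ltn_ord r).
have -> : [set i : 'I_K | i < r] = widen_ord rK @: [set: 'I_r].
  apply/setP => i; rewrite !inE; apply/idP/imsetP.
    by move=> ir; exists (Ordinal ir) => //; apply: val_inj.
  by case=> j _ ->; rewrite /= ltn_ord.
have widen_inj : injective (widen_ord rK) by move=> a b /(congr1 val) /= /val_inj.
by rewrite card_imset // cardsT card_ord.
Qed.

Section IncreasingImage.

Variables (n K : nat) (F : 'I_K -> 'I_n).
Hypothesis F_incr : forall i j : 'I_K, i < j -> F i < F j.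

Lemma increasing_ltn (i j : 'I_K) : (F i < F j) = (i < j).
Proof.
case: (ltngtP i j) => [ij | ji | /val_inj -> ]; first exact: F_incr.
  by apply/negbTE; rewrite -leqNgt ltnW // F_incr.
by rewrite ltnn.
Qed.

Lemma increasing_inj : injective F.
Proof.
move=> i j Fij; apply/val_inj.
by case: (ltngtP i j) => // ij; have := F_incr ij; rewrite Fij ltnn.
Qed.

Lemma card_increasing_image : #|F @: [set: 'I_K]| = K.
Proof. by rewrite card_imset ?cardsT ?card_ord //; apply: increasing_inj. Qed.

Lemma rank_in_increasing_image r : rank_in (F @: [set: 'I_K]) (F r) = r.
Proof.
rewrite /rank_in.
have -> : [set y in F @: [set: 'I_K] | y < F r] = F @: [set i : 'I_K | i < r].
  apply/setP => y; rewrite !inE; apply/andP/imsetP.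
    by case=> /imsetP[i _ ->]; rewrite increasing_ltn => ir; exists i; rewrite ?inE.
  by case=> i; rewrite inE => ir ->; rewrite imset_f ?inE // increasing_ltn.
by rewrite card_imset ?card_ord_lt //; apply: increasing_inj.
Qed.

End IncreasingImage.

Lemma exists_increasing_enum n (B : {set 'I_n}) : 0 < #|B| ->
  exists pos : nat -> 'I_n, (forall i, i < #|B| -> pos i \in B) /\
    (forall i j, i < j -> j < #|B| -> pos i < pos j).
Proof.
case/card_gt0P => x0 _; exists (nth x0 (enum B)); split => [i | i j ij jB].
  by rewrite cardE -mem_enum; apply: mem_nth.
have ltn_trans_val : transitive (relpre (@nat_of_ord n) ltn).
  by move=> y x z; apply: ltn_trans.
have sortedB : sorted (relpre (@nat_of_ord n) ltn) (enum B).
  rewrite /enum_mem -enumT (sorted_filter ltn_trans_val) //.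
  by rewrite -sorted_map val_enum_ord iota_ltn_sorted.
by apply: (sorted_ltn_nth ltn_trans_val x0 sortedB);
  rewrite ?inE -?cardE // (ltn_trans ij).
Qed.

Lemma exists_colour_class (V : finType) (col : nat -> bool) :
  exists b (sig : V -> nat),
    [/\ injective sig, forall v, sig v < 2 * #|V| & forall v, col (sig v) = b].
Proof.
pose P b := [set r : 'I_(2 * #|V|) | col r == b].
have [b leVP] : exists b, #|V| <= #|P b|.
  have : #|P true| + #|P false| = 2 * #|V|.
    have -> : P false = ~: P true by apply/setP => r; rewrite !inE; case: (col r).
    by rewrite cardsC card_ord.
  by case: (leqP #|V| #|P true|) => ?; [exists true | exists false]; lia.
pose sig v := enum_val (widen_ord leVP (enum_rank v)).
exists b, (fun v => val (sig v)); split => [u v /val_inj | v | v].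
- by move/enum_val_inj/(congr1 val); rewrite /= => /val_inj/enum_rank_inj.
- exact: ltn_ord.
- by have := enum_valP (widen_ord leVP (enum_rank v)); rewrite inE => /eqP.
Qed.

Definition rank_colouring n (c : 'I_n -> {set 'I_n} -> bool) (i : nat)
    (X : {set 'I_n}) :=
  [exists x in X, (rank_in X x == i) && c x X].

Lemma colour_by_rank n k (c : 'I_n -> {set 'I_n} -> bool) B (col : nat -> bool) :
  (forall i, i < k -> monochromatic k (rank_colouring c i) B (col i)) ->
  forall (X : {set 'I_n}) x, X \subset B -> #|X| = k -> x \in X ->
  c x X = col (rank_in X x).
Proof.
move=> hom X x sXB cardX xX.
rewrite -(hom _ _ X sXB cardX) -?cardX ?rank_in_lt_card //.
apply/idP/existsP => [cx | [y /and3P[yX /eqP rxy cy]]].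
  by exists x; rewrite xX eqxx.
by rewrite -(rank_in_inj yX xX rxy).
Qed.

Definition edge_colour n k (c : Bedge n k -> bool) (x : 'I_n) (X : {set 'I_n}) :
    bool :=
  if insub X is Some KX then
    if insub (x, KX) is Some p then c p else false
  else false.

Lemma edge_colourE n k c (p : Bedge n k) :
  edge_colour c (val p).1 (val (val p).2) = c p.
Proof. by case: p => [[x [X KX]] xX]; rewrite /edge_colour /= insubT /= insubT. Qed.

Lemma eq_quot_rem d q1 q2 r1 r2 : r1 < d -> r2 < d ->
  q1 * d + r1 = q2 * d + r2 -> q1 = q2 /\ r1 = r2.
Proof. by move=> r1d r2d /(congr1 (edivn^~ d)); rewrite !edivn_eq // => -[]. Qed.

Section Encoding.

Variables (n : nat) (V : finType) (e : rel V) (L : nat) (sig : V -> nat).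
Variable pos : nat -> 'I_n.
Hypothesis sig_inj : injective sig.
Hypothesis sig_lt : forall v, sig v < L.

Let W := #|V|.+2.

Hypothesis pos_incr : forall i j, i < j -> j < L.+1 * W -> pos i < pos j.

(* Block L only separates distinct right vertices; block sig w is hit at
   offset 0 iff w is a neighbour of u. *)
Definition offset u (r : nat) : nat :=
  if r == L then val (enum_rank u)
  else if [exists w, e u w && (sig w == r)] then 0 else 1.

Definition point w := pos (sig w * W).

Definition block_elem u (r : 'I_L.+1) := pos (r * W + offset u r).

Definition block u := block_elem u @: [set: 'I_L.+1].

Lemma offset_lt u r : offset u r < W.
Proof.
rewrite /offset /W; case: ifP => _; last by case: ifP.
by apply: (ltn_trans (ltn_ord _)); apply: ltnW.
Qed.

Lemma code_ltS u r : r * W + offset u r < r.+1 * W.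
Proof. by rewrite mulSn addnC ltn_add2r offset_lt. Qed.

Lemma block_code_lt u (r : 'I_L.+1) : r * W + offset u r < L.+1 * W.
Proof. by apply: leq_trans (code_ltS u r) _; rewrite leq_mul2r ltn_ord orbT. Qed.

Lemma pos_inj i j : i < L.+1 * W -> j < L.+1 * W -> pos i = pos j -> i = j.
Proof.
move=> iLW jLW Eij; case: (ltngtP i j) => // [ij | ji].
  by have := pos_incr ij jLW; rewrite Eij ltnn.
by have := pos_incr ji iLW; rewrite Eij ltnn.
Qed.

Lemma block_elem_incr u (i j : 'I_L.+1) : i < j -> block_elem u i < block_elem u j.
Proof.
move=> ij; apply: pos_incr (block_code_lt u j).
apply: leq_trans (code_ltS u i) (leq_trans _ (leq_addr _ _)).
by rewrite leq_mul2r ij orbT.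
Qed.

Lemma card_block u : #|block u| = L.+1.
Proof. exact/card_increasing_image/block_elem_incr. Qed.

Lemma point_code_lt w : sig w * W < L.+1 * W.
Proof. by rewrite ltn_mul2r ltnS (ltnW (sig_lt w)). Qed.

Definition slot w : 'I_L.+1 := @Ordinal L.+1 (sig w) (ltnW (sig_lt w)).

Lemma block_elem_slot u w : e u w -> block_elem u (slot w) = point w.
Proof.
move=> euw; rewrite /block_elem /offset /= ltn_eqF ?sig_lt //.
by case: existsP => [_ | []]; [rewrite addn0 | exists w; rewrite euw eqxx].
Qed.

Lemma mem_point_block u w : (point w \in block u) = e u w.
Proof.
apply/imsetP/idP => [[r _ Ewr] | euw]; last first.
  by exists (slot w); rewrite ?block_elem_slot.
have := pos_inj (point_code_lt w) (block_code_lt u r) Ewr; rewrite -[sig w * W]addn0.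
case/(eq_quot_rem (isT : 0 < W) (offset_lt u r)) => rw off0.
move: off0; rewrite /offset -rw ltn_eqF ?sig_lt //.
by case: existsP => // -[w' /andP[euw' /eqP /sig_inj <-]].
Qed.

Lemma rank_point_block u w : e u w -> rank_in (block u) (point w) = sig w.
Proof.
move=> euw; rewrite -(block_elem_slot euw).
exact/rank_in_increasing_image/block_elem_incr.
Qed.

Lemma point_inj : injective point.
Proof.
move=> v w Evw; have := pos_inj (point_code_lt v) (point_code_lt w) Evw.
by rewrite -[sig v * W]addn0 -[sig w * W]addn0 => /eq_quot_rem[] // /sig_inj.
Qed.

Lemma block_inj : injective block.
Proof.
move=> u v Euv.
have : block_elem u ord_max \in block v by rewrite -Euv imset_f.
case/imsetP => r _ /(pos_inj (block_code_lt u _) (block_code_lt v _)).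
case/eq_quot_rem => [||Lr]; rewrite ?offset_lt //.
by rewrite /offset -Lr eqxx => /val_inj/enum_rank_inj.
Qed.

Variable side : V -> bool.
Hypothesis e_sym : symmetric e.
Hypothesis side_edge : forall u v, e u v -> side u != side v.

Definition block_kset u : kset n L.+1 := exist _ (block u) (introT eqP (card_block u)).

Definition embed v : Bvert n L.+1 :=
  if side v then inl (point v) else inr (block_kset v).

Lemma embed_inj : injective embed.
Proof.
rewrite /embed => u v; case: (side u); case: (side v) => // -[].
  exact: point_inj.
exact: block_inj.
Qed.

Lemma Badj_embed u v : e u v = Badj (embed u) (embed v).
Proof.
rewrite /embed; case su: (side u); case sv: (side v) => /=.
- by apply/negbTE/negP => /side_edge; rewrite su sv.
- by rewrite mem_point_block e_sym.
- by rewrite mem_point_block.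
- by apply/negbTE/negP => /side_edge; rewrite su sv.
Qed.

Lemma embed_inl x w : inl x = embed w -> x = point w.
Proof. by rewrite /embed; case: (side w) => // -[]. Qed.

Lemma embed_inr X u : inr X = embed u -> val X = block u.
Proof. by rewrite /embed; case: (side u) => // -[->]. Qed.

Lemma block_subset (B : {set 'I_n}) u :
  (forall i, i < L.+1 * W -> pos i \in B) -> block u \subset B.
Proof.
by move=> posB; apply/subsetP => _ /imsetP[r _ ->]; apply/posB/block_code_lt.
Qed.

End Encoding.

Theorem mainTheorem1 (V : finType) (e : rel V) :
  simple_graph e -> bipartite e ->
  exists n k : nat, k <= n /\
    forall c : Bedge n k -> bool,
      exists (V' : {set Bvert n k}) (f : V -> Bvert n k),
        [/\ injective f,
            forall v, f v \in V',
            forall w, w \in V' -> exists v, f v = w,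
            forall u v, e u v = Badj (f u) (f v)
          & exists col : bool, forall p : Bedge n k,
              inl (val p).1 \in V' -> inr (val p).2 \in V' -> c p = col].
Proof.
move=> [e_sym _] [side side_edge].
pose L := 2 * #|V|; pose m := L.+1 * #|V|.+2.
have [N ramseyN] := ramsey_simultaneous L.+1 L.+1 m.
exists (maxn N L.+1), L.+1; split => [|c]; first exact: leq_maxr.
have leNn : N <= #|[set: 'I_(maxn N L.+1)]| by rewrite cardsT card_ord leq_maxl.
have [B [col [_ cardB homB]]] := ramseyN _ _ (rank_colouring (edge_colour c)) leNn.
have [pos [posB pos_incr]] := exists_increasing_enum (leq_trans (isT : 0 < m) cardB).
have pos_incr_m i j : i < j -> j < m -> pos i < pos j.
  by move=> ij jm; apply: pos_incr ij (leq_trans jm cardB).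
have posB_m i : i < m -> pos i \in B by move=> im; apply/posB/(leq_trans im cardB).
have [b [sig [sig_inj sig_lt colP]]] := exists_colour_class V col.
pose f := embed e sig pos_incr_m side.
exists (f @: setT), f; split.
- exact: embed_inj.
- by move=> v; rewrite imset_f.
- by move=> _ /imsetP[v _ ->]; exists v.
- exact: Badj_embed.
exists b => -[[x X] /= xX] /imsetP[w _ /embed_inl xw] /imsetP[u _ /embed_inr Xu].
rewrite -edge_colourE /= Xu; rewrite Xu in xX.
have euw : e u w by rewrite -(mem_point_block e sig_inj sig_lt pos_incr_m) -xw.
rewrite (colour_by_rank homB (block_subset e sig u posB_m)
  (card_block e sig pos_incr_m u) xX).
by rewrite xw (rank_point_block sig_lt pos_incr_m euw) colP.
Qed.
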